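(* Let $G$ be a looped simple graph, $T$ a transversal of $W(G)$, and $B$ a basis of the transverse matroid $M[IAS(G)]|T$. Let $V_B=\{v\in V(G): B\cap\tau_G(v)\neq\emptyset\}$. Then there is a looped simple graph $H$ locally equivalent to $G$ and an induced isomorphism $\beta:M[IAS(G)]\to M[IAS(H)]$ such that (1) $V(G)\setminus V_B$ is a stable set of $H$, and (2) $\beta(T)=\{\phi_H(v):v\in V_B\}\cup\bigcup_{v\in V(G)\setminus V_B}\zeta_H(v)$.
   Context: A looped simple graph is a finite graph in which each vertex carries at most one loop and no two distinct vertices are joined by more than one edge. ''Adjacent''/''neighbors'' refer only to distinct vertices joined by a non-loop edge; $N_G(v)$ is the set of neighbors of $v$; a stable set is a set of vertices no two of which are adjacent. $A(G)$ is the $V(G)\times V(G)$ matrix over $GF(2)$ with diagonal entry $1$ exactly at looped vertices and off-diagonal entry $1$ exactly for adjacent pairs. $IAS(G)=(I\mid A(G)\mid A(G)+I)$ over $GF(2)$, rows indexed by $V(G)$; the $v$-columns of the three blocks are labelled $\phi_G(v),\chi_G(v),\psi_G(v)$. $M[IAS(G)]$ is the binary column matroid of $IAS(G)$ on $W(G)=\{\phi_G(v),\chi_G(v),\psi_G(v):v\in V(G)\}$. The vertex triple of $v$ is $\tau_G(v)=\{\phi_G(v),\chi_G(v),\psi_G(v)\}$; a transversal meets each vertex triple in exactly one element; a transverse matroid is the restriction of $M[IAS(G)]$ to a transversal. Neighborhood circuit: $\zeta_G(v)=\{\chi_G(v)\}\cup\{\phi_G(w):w\in N_G(v)\}$ if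 $v$ is unlooped, and $\{\psi_G(v)\}\cup\{\phi_G(w):w\in N_G(v)\}$ if $v$ is looped. Local equivalence: $G_\ell^v$ complements the loop status of $v$; $G_s^v$ complements the adjacency status of every pair of distinct neighbors of $v$; $G_{ns}^v$ does this and also complements the loop status of every neighbor of $v$. $H$ is locally equivalent to $G$ if obtained from $G$ by a finite sequence of such operations (so $V(H)=V(G)$). Induced isomorphisms: for each such operation producing $G'$ from $G$ there is a matroid isomorphism $M[IAS(G)]\to M[IAS(G')]$ sending $\alpha_G(x)\mapsto\alpha_{G'}(x)$ for all $\alpha\in\{\phi,\chi,\psi\}$, $x\in V(G)$, except: for $G'=G_\ell^v$, $\chi_G(v)\mapsto\psi_{G'}(v)$, $\psi_G(v)\mapsto\chi_{G'}(v)$; for $G'=G_{ns}^v$ with $v$ unlooped, $\phi_G(v)\mapsto\psi_{G'}(v)$, $\psi_G(v)\mapsto\phi_{G'}(v)$, and with $v$ looped, $\phi_G(v)\mapsto\chi_{G'}(v)$, $\chi_G(v)\mapsto\phi_{G'}(v)$; for $G'=G_s^v$, the same exchange at $v$ as for $G_{ns}^v$ and in addition, for every $w\in N_G(v)$, $\chi_G(w)\mapsto\psi_{G'}(w)$, $\psi_G(w)\mapsto\chi_{G'}(w)$. An induced isomorphism $M[IAS(G)]\to M[IAS(H)]$ is a composition of such isomorphisms along a sequence of operations transforming $G$ into $H$; it maps $\tau_G(v)$ onto $\tau_H(v)$ for every $v$. *)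

From HB Require Import structures.
From mathcomp Require Import all_boot all_order all_algebra.
Set Implicit Arguments. Unset Strict Implicit. Unset Printing Implicit Defensive.
Import GRing.Theory.

Record lgraph (V : finType) := LGraph { adj : rel V ; loop : pred V }.

Definition looped_simple (V : finType) (G : lgraph V) : Prop :=
  (forall x y, adj G x y = adj G y x) /\ (forall x, adj G x x = false).

(* Elements of W(G): pairs (v, k) with k : 'I_3;
   k = 0 is phi_G(v), k = 1 is chi_G(v), k = 2 is psi_G(v). *)
Definition kphi : 'I_3 := @Ordinal 3 0 isT.
Definition kchi : 'I_3 := @Ordinal 3 1 isT.
Definition kpsi : 'I_3 := @Ordinal 3 2 isT.

Definition Amx (V : finType) (G : lgraph V) (u v : V) : bool :=
  if u == v then loop G v else adj G u v.

(* entry in row u of the column of IAS(G) labelled x *)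
Definition IAS (V : finType) (G : lgraph V) (x : V * 'I_3) (u : V) : 'F_2 :=
  let: (v, k) := x in
  (if k == kphi then (u == v)%:R
  else if k == kchi then (Amx G u v)%:R
  else (Amx G u v)%:R + (u == v)%:R)%R.

(* independence in M[IAS(G)]: the columns are linearly independent over GF(2),
   i.e. no nonempty subset of them sums to zero. *)
Definition indep (V : finType) (G : lgraph V) (S : {set V * 'I_3}) : Prop :=
  forall X : {set V * 'I_3}, X \subset S ->
    (forall u : V, (\sum_(x in X) IAS G x u)%R = 0%R) -> X = set0.

Definition W_transversal (V : finType) (T : {set V * 'I_3}) : Prop :=
  forall v : V, #|[set k : 'I_3 | (v, k) \in T]| = 1%N.

Definition basis_of_restr (V : finType) (G : lgraph V) (T B : {set V * 'I_3}) : Prop :=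
  [/\ B \subset T, indep G B &
      forall B' : {set V * 'I_3}, B \subset B' -> B' \subset T -> indep G B' -> B' = B].

Definition stable_set (V : finType) (G : lgraph V) (S : {set V}) : Prop :=
  forall x y, x \in S -> y \in S -> adj G x y = false.

Definition zeta (V : finType) (G : lgraph V) (v : V) : {set V * 'I_3} :=
  (v, if loop G v then kpsi else kchi) |: [set (w, kphi) | w in [set w | adj G v w]].

Inductive lop := OpL | OpS | OpNS.

Definition op_graph (V : finType) (o : lop) (v : V) (G : lgraph V) : lgraph V :=
  match o with
  | OpL => LGraph (adj G) (fun x => if x == v then ~~ loop G x else loop G x)
  | OpS => LGraph (fun x y => adj G x y (+) [&& adj G v x, adj G v y & x != y])
                  (loop G)
  | OpNS => LGraph (fun x y => adj G x y (+) [&& adj G v x, adj G v y & x != y])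
                   (fun x => loop G x (+) adj G v x)
  end.

Definition xch (V : finType) (w : V) (a b : 'I_3) (x : V * 'I_3) : V * 'I_3 :=
  if x.1 == w then
    (if x.2 == a then (w, b) else if x.2 == b then (w, a) else x)
  else x.

Definition op_map (V : finType) (o : lop) (v : V) (G : lgraph V)
    (x : V * 'I_3) : V * 'I_3 :=
  let ns_exch := if loop G v then xch v kphi kchi x else xch v kphi kpsi x in
  match o with
  | OpL => xch v kchi kpsi x
  | OpNS => ns_exch
  | OpS => if x.1 == v then ns_exch
           else if adj G v x.1 then xch x.1 kchi kpsi x else x
  end.

(* applying a sequence of operations (first element applied first):
   returns the resulting graph H and the composed induced isomorphism *)
Fixpoint run (V : finType) (ops : seq (lop * V)) (G : lgraph V)
    : lgraph V * (V * 'I_3 -> V * 'I_3) :=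
  match ops with
  | [::] => (G, id)
  | (o, v) :: os =>
      let r := run os (op_graph o v G) in
      (r.1, fun x => r.2 (op_map o v G x))
  end.

(* A local operation at v acts on IAS(G) by an invertible row operation (row v
   is added to the rows of the neighbours of v) followed by a permutation of
   labels inside vertex triples, so it carries transversals and bases of
   transverse matroids to transversals and bases.  Measure (T, B) by the set
   of vertices of V_B whose element of T is not phi.  A vertex v of this set
   whose element of T is neither phi nor the label of zeta(v) is repaired by
   G_ns^v.  If it is the label of zeta(v), then zeta(v) is not contained in B
   since its columns sum to zero, so some neighbour w has phi(w) outside B;
   G_s^w swaps chi(v) and psi(v) without enlarging the measure, and G_ns^v
   then repairs v.  Once every vertex of V_B carries phi, B consists of phi's,
   and maximality of B forces every vertex outside V_B to carry the label of
   its zeta with all its neighbours in V_B, which is the required form. *)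

From HB Require Import structures.
From mathcomp Require Import all_boot all_order all_algebra.
Set Implicit Arguments. Unset Strict Implicit. Unset Printing Implicit Defensive.
Import GRing.Theory.
Local Open Scope ring_scope.

Definition b2F (b : bool) : 'F_2 := b%:R.

Lemma b2F_add a b : b2F a + b2F b = b2F (a (+) b).
Proof. by case: a; case: b; apply/eqP. Qed.

Lemma b2F_mul a b : b2F a * b2F b = b2F (a && b).
Proof. by case: a; case: b; apply/eqP. Qed.

Lemma b2F_add_eq0 a b : (b2F a + b2F b == 0) = (a == b).
Proof. by case: a; case: b. Qed.

Lemma sum_b2F_eq (I : finType) (A : {pred I}) (x : I) :
  \sum_(i in A) b2F (x == i) = b2F (x \in A).
Proof.
have [xA|xA] := boolP (x \in A); last first.
  by rewrite big1 // => i iA; case: eqVneq => // ei; rewrite ei iA in xA.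
rewrite (bigD1 x) //= eqxx big1 ?addr0 // => i /andP[_ ix].
by rewrite eq_sym (negbTE ix).
Qed.

Lemma labelP (k : 'I_3) : [\/ k = kphi, k = kchi | k = kpsi].
Proof.
by case: k => [[|[|[|//]]] ?]; [apply: Or31 | apply: Or32 | apply: Or33]; apply: val_inj.
Qed.

Lemma label_neq :
  ((kphi == kchi) = false) * ((kphi == kpsi) = false) * ((kchi == kphi) = false) *
  ((kchi == kpsi) = false) * ((kpsi == kphi) = false) * ((kpsi == kchi) = false).
Proof. by []. Qed.

Lemma setD1_eq_subset (T : finType) (A A' : {set T}) x :
  A' :\ x = A :\ x -> (x \in A' -> x \in A) -> A' \subset A.
Proof.
move=> eA xA; apply/subsetP => y; have [-> //|yx yA'] := eqVneq y x.
by have /setD1P[] : y \in A :\ x by rewrite -eA in_setD1 yx yA'.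
Qed.

Lemma setD1_eq_proper (T : finType) (A A' : {set T}) x :
  A' :\ x = A :\ x -> x \in A -> x \notin A' -> A' \proper A.
Proof.
move=> eA xA xA'; apply/properP; split; last by exists x.
by apply: setD1_eq_subset eA _ => xA''; rewrite xA'' in xA'.
Qed.

Definition vsupport (V : finType) (B : {set V * 'I_3}) := [set v | [exists k, (v, k) \in B]].

Section VertexPreservingMap.

Variables (V : finType) (g : V * 'I_3 -> V * 'I_3).
Hypothesis g_fst : forall x, (g x).1 = x.1.
Implicit Types S T B : {set V * 'I_3}.

Lemma g_pair w k : g (w, k) = (w, (g (w, k)).2).
Proof. by have := g_fst (w, k); case: (g (w, k)) => a b /= ->. Qed.

Lemma mem_imset_pair S u k :
  ((u, k) \in g @: S) = [exists l, ((u, l) \in S) && (g (u, l) == (u, k))].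
Proof.
apply/imsetP/existsP => [[[w l] wlS e]|[l /andP[ulS /eqP <-]]]; last by exists (u, l).
have ew : w = u by have := g_fst (w, l); rewrite -e.
by subst w; exists l; rewrite wlS -e eqxx.
Qed.

Lemma vsupport_imset B : vsupport (g @: B) = vsupport B.
Proof.
apply/setP=> u; rewrite !inE; apply/existsP/existsP => [[k]|[k ukB]].
  by rewrite mem_imset_pair => /existsP[l /andP[ulB _]]; exists l.
by exists (g (u, k)).2; rewrite -g_pair imset_f.
Qed.

Hypothesis g_inj : injective g.

Lemma transversal_imset T : W_transversal T -> W_transversal (g @: T).
Proof.
move=> HT u; pose h k := (g (u, k)).2.
have h_inj : injective h.
  move=> k1 k2 ek; suff /g_inj [] : g (u, k1) = g (u, k2) by [].
  by rewrite [g (u, k1)]g_pair [g (u, k2)]g_pair; congr pair.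
suff -> : [set k | (u, k) \in g @: T] = h @: [set k | (u, k) \in T] by rewrite card_imset.
apply/setP=> k; rewrite inE mem_imset_pair; apply/existsP/imsetP => [[l]|[l]].
  by case/andP=> ulT /eqP e; exists l; rewrite ?inE // /h e.
by rewrite inE => ulT ->; exists l; rewrite ulT /h -g_pair eqxx.
Qed.

End VertexPreservingMap.

Section LocalOperation.

Variable V : finType.
Implicit Types (G : lgraph V) (S T B X : {set V * 'I_3}).

Lemma xchK (w : V) a b : a != b -> involutive (xch w a b).
Proof.
move=> ab [y k]; rewrite /xch /=; have [->|yw] := eqVneq y w; last by rewrite /= (negbTE yw).
have [->|ka] := eqVneq k a; first by rewrite /= !eqxx eq_sym (negbTE ab).
have [->|kb] := eqVneq k b; first by rewrite /= !eqxx.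
by rewrite /= eqxx (negbTE ka) (negbTE kb).
Qed.

Lemma xch_fst (w : V) a b x : (xch w a b x).1 = x.1.
Proof. by case: x => y k; rewrite /xch /=; case: eqP => [->|//]; do 2?case: ifP. Qed.

Lemma op_map_fst o v G x : (op_map o v G x).1 = x.1.
Proof. by case: o; rewrite /op_map; do ?case: ifP => _; rewrite ?xch_fst. Qed.

Lemma op_mapK o v G : involutive (op_map o v G).
Proof.
case=> w k; rewrite /op_map; case: o; first by rewrite xchK.
- have [->|wv] := eqVneq w v; first by case: (loop G v); rewrite !xch_fst /= eqxx xchK.
  have [vw|nvw] := boolP (adj G v w); first by rewrite !xch_fst /= (negbTE wv) vw xchK.
  by rewrite /= (negbTE wv) (negbTE nvw).
- by case: (loop G v); rewrite xchK.
Qed.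

Lemma op_map_inj o v G : injective (op_map o v G).
Proof. exact: inv_inj (op_mapK o v G). Qed.

Lemma mem_imset_op_map o v G S y : (y \in op_map o v G @: S) = (op_map o v G y \in S).
Proof.
apply/imsetP/idP => [[x xS ->]|yS]; first by rewrite op_mapK.
by exists (op_map o v G y); rewrite ?op_mapK.
Qed.

Lemma imset_op_mapK o v G S : op_map o v G @: (op_map o v G @: S) = S.
Proof. by apply/setP => y; rewrite !mem_imset_op_map op_mapK. Qed.

Lemma op_map_phi o v G x : x != v -> op_map o v G (x, kphi) = (x, kphi).
Proof.
by move=> xv; case: o; rewrite /op_map /xch /= (negbTE xv) ?eqxx ?label_neq //; case: ifP.
Qed.

Definition ias_bit G (x : V * 'I_3) (u : V) : bool :=
  if x.2 == kphi then u == x.1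
  else if x.2 == kchi then Amx G u x.1 else Amx G u x.1 (+) (u == x.1).

Lemma IAS_bit G x u : IAS G x u = b2F (ias_bit G x u).
Proof. by case: x => w k; rewrite /IAS /ias_bit; do 2?case: ifP => _ //; rewrite b2F_add. Qed.

Definition nvec o v G (u : V) : bool := if o is OpL then false else adj G v u.

Ltac neq_simpl := repeat match goal with
  | h : is_true (?a != ?b) |- context[?a == ?b] => rewrite (negbTE h)
  | h : is_true (?a != ?b) |- context[?b == ?a] => rewrite [b == a]eq_sym (negbTE h)
  end.

Ltac simpl_labels irr := rewrite /= ?eqxx ?irr ?label_neq; neq_simpl.

Ltac bool_cases sym irr := repeat (simpl_labels irr;
  match goal with
  | |- context[adj ?G ?a ?b] =>
      is_var a; is_var b; try rewrite [adj G b a]sym; case: (adj G a b)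
  | |- context[loop ?G ?a] => is_var a; case: (loop G a)
  end); simpl_labels irr.

Ltac split_eq a b := case: (eqVneq a b) => [?|?]; [subst a|].

Lemma ias_bit_op o v G x u : looped_simple G ->
  ias_bit (op_graph o v G) (op_map o v G x) u =
  ias_bit G x u (+) nvec o v G u && ias_bit G x v.
Proof.
case=> sym irr; case: x => w k; rewrite (g_pair (op_map_fst o v G)) /ias_bit /=.
have [->|->|->] := labelP k; split_eq w v; split_eq u v; try split_eq u w;
  case: o; rewrite /op_map /op_graph /xch /Amx /nvec;
  by bool_cases sym irr.
Qed.

Lemma sum_IAS_op o v G X u : looped_simple G ->
  \sum_(y in op_map o v G @: X) IAS (op_graph o v G) y u =
  \sum_(x in X) IAS G x u + b2F (nvec o v G u) * \sum_(x in X) IAS G x v.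
Proof.
move=> HG; rewrite big_imset /=; last by move=> x y _ _; apply: op_map_inj.
rewrite mulr_sumr -big_split; apply: eq_bigr => x _ /=.
by rewrite !IAS_bit ias_bit_op // b2F_mul b2F_add.
Qed.

Lemma sum_IAS_op_eq0 o v G X : looped_simple G ->
  (forall u, \sum_(x in X) IAS G x u = 0) <->
  (forall u, \sum_(y in op_map o v G @: X) IAS (op_graph o v G) y u = 0).
Proof.
move=> HG; have nv : nvec o v G v = false by case: HG => _ irr; case: o; rewrite /nvec ?irr.
split=> X0 u; first by rewrite sum_IAS_op // !X0 mulr0 addr0.
have := X0 v; rewrite sum_IAS_op // nv mul0r addr0 => Xv.
by have := X0 u; rewrite sum_IAS_op // Xv mulr0 addr0.
Qed.

Lemma indep_op o v G S : looped_simple G ->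
  indep G S <-> indep (op_graph o v G) (op_map o v G @: S).
Proof.
move=> HG; split=> iS X sX X0.
- have X0' : op_map o v G @: X = set0.
    apply: iS; first by rewrite -(imset_op_mapK o v G S) imsetS.
    by apply/(sum_IAS_op_eq0 o v _ HG); rewrite imset_op_mapK.
  by rewrite -(imset_op_mapK o v G X) X0' imset0.
- apply/eqP; rewrite -(imset_eq0 (op_map o v G)); apply/eqP/iS; first exact: imsetS.
  exact/(sum_IAS_op_eq0 o v _ HG).
Qed.

Lemma looped_simple_op o v G : looped_simple G -> looped_simple (op_graph o v G).
Proof.
case=> sym irr; case: o; split=> x //=; rewrite ?irr ?eqxx ?andbF // => y;
  by rewrite sym [y == x]eq_sym andbCA.
Qed.

Lemma basis_op o v G T B : looped_simple G -> basis_of_restr G T B ->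
  basis_of_restr (op_graph o v G) (op_map o v G @: T) (op_map o v G @: B).
Proof.
move=> HG [sBT iB maxB]; split; [exact: imsetS | exact/(indep_op o v B HG) |].
move=> B' sB sT iB'; rewrite -(imset_op_mapK o v G B') (maxB (op_map o v G @: B')) //.
- by rewrite -(imset_op_mapK o v G B) imsetS.
- by rewrite -(imset_op_mapK o v G T) imsetS.
- by apply/(indep_op o v _ HG); rewrite imset_op_mapK.
Qed.

Definition transverse_basis G T B :=
  [/\ looped_simple G, W_transversal T & basis_of_restr G T B].

Lemma transverse_basis_op o v G T B : transverse_basis G T B ->
  transverse_basis (op_graph o v G) (op_map o v G @: T) (op_map o v G @: B).
Proof.
case=> HG HT HB; split; [exact: looped_simple_op | | exact: basis_op].
exact (transversal_imset (op_map_fst o v G) (@op_map_inj o v G) HT).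
Qed.

End LocalOperation.

Section Reduction.

Variable V : finType.
Implicit Types (G : lgraph V) (S T B X : {set V * 'I_3}).

Lemma run_fst ops G x : ((run ops G).2 x).1 = x.1.
Proof. by elim: ops G x => [|[o v] ops IH] G x //=; rewrite IH op_map_fst. Qed.

Lemma run_cat ops ops' G : run (ops ++ ops') G =
  ((run ops' (run ops G).1).1, (run ops' (run ops G).1).2 \o (run ops G).2).
Proof.
elim: ops G => [|[o v] ops IH] G /=; last by rewrite IH.
by case: (run ops' G).
Qed.

Lemma run_cons_imset o v ops G S :
  (run ((o, v) :: ops) G).2 @: S = (run ops (op_graph o v G)).2 @: (op_map o v G @: S).
Proof. by rewrite -imset_comp. Qed.

Lemma transverse_basis_run ops G T B : transverse_basis G T B ->
  transverse_basis (run ops G).1 ((run ops G).2 @: T) ((run ops G).2 @: B).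
Proof.
elim: ops G T B => [|[o v] ops IH] G T B tb; first by rewrite /= !imset_id.
by rewrite !run_cons_imset; apply/IH/transverse_basis_op.
Qed.

Lemma transversal_uniq T u k1 k2 :
  W_transversal T -> (u, k1) \in T -> (u, k2) \in T -> k1 = k2.
Proof.
move=> HT uk1 uk2; have /cards1P[k Tu] : #|[set k | (u, k) \in T]| == 1%N by rewrite HT.
have : k1 \in [set k | (u, k) \in T] by rewrite inE.
have : k2 \in [set k | (u, k) \in T] by rewrite inE.
by rewrite Tu !inE => /eqP -> /eqP ->.
Qed.

Lemma transversal_ex T u : W_transversal T -> exists k, (u, k) \in T.
Proof.
move=> HT; have : [set k | (u, k) \in T] != set0 by rewrite -card_gt0 HT.
by case/set0Pn => k; rewrite inE; exists k.
Qed.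

Lemma mem_vsupport B u k : (u, k) \in B -> u \in vsupport B.
Proof. by move=> ukB; rewrite inE; apply/existsP; exists k. Qed.

Lemma mem_basis_transversal G T B u k : W_transversal T -> basis_of_restr G T B ->
  u \in vsupport B -> (u, k) \in T -> (u, k) \in B.
Proof.
move=> HT [sBT _ _]; rewrite inE => /existsP[l ulB] ukT.
by rewrite (transversal_uniq HT ukT (subsetP sBT _ ulB)).
Qed.

(* zlabel G v is the label of the element of zeta_G(v) in the vertex triple of v,
   olabel G v the remaining label other than phi. *)
Definition zlabel G (v : V) := if loop G v then kpsi else kchi.
Definition olabel G (v : V) := if loop G v then kchi else kpsi.

Lemma olabelP G u k : k != kphi -> k != zlabel G u -> k = olabel G u.
Proof. by rewrite /zlabel /olabel; have [->|->|->] := labelP k; case: (loop G u). Qed.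

Lemma ias_bit_self G u k : ias_bit G (u, k) u = (k != zlabel G u).
Proof.
rewrite /ias_bit /zlabel /Amx /= eqxx.
by have [->|->|->] := labelP k; case: (loop G u); rewrite ?label_neq.
Qed.

Lemma ias_bit_zlabel G u x : looped_simple G -> ias_bit G (u, zlabel G u) x = adj G u x.
Proof.
case=> sym irr; rewrite /ias_bit /zlabel /Amx /= [adj G u x]sym.
have [->|xu] := eqVneq x u; first by rewrite irr; case: (loop G u).
by case: (loop G u); rewrite ?label_neq /= ?addbF.
Qed.

Lemma ias_bit_phi G w x : ias_bit G (w, kphi) x = (x == w).
Proof. by []. Qed.

Lemma zeta_sum_IAS G u x : looped_simple G -> \sum_(y in zeta G u) IAS G y x = 0.
Proof.
move=> HG; rewrite /zeta -/(zlabel G u) big_setU1; last first.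
  by apply/imsetP => -[w _ []]; rewrite /zlabel; case: (loop G u).
rewrite big_imset; last by move=> w w' _ _ [].
under eq_bigr do rewrite IAS_bit ias_bit_phi.
by rewrite sum_b2F_eq IAS_bit ias_bit_zlabel // inE /= b2F_add addbb.
Qed.

Lemma zeta_not_subset G S u : looped_simple G -> indep G S -> ~ zeta G u \subset S.
Proof.
move=> HG iS /iS /(_ (zeta_sum_IAS u ^~ HG))/setP/(_ (u, zlabel G u)).
by rewrite in_set0 /zeta setU11.
Qed.

Lemma indep_setU1_phi G S u k : looped_simple G -> indep G S ->
  {in S, forall y, y.2 = kphi} -> (u, kphi) \notin S ->
  ~~ ((k == zlabel G u) && [forall w, adj G u w ==> ((w, kphi) \in S)]) ->
  indep G ((u, k) |: S).
Proof.
move=> HG iS Sphi uS nzeta X sX X0.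
have [ukX|ukX] := boolP ((u, k) \in X); last first.
  apply: iS X0; apply/subsetP => y yX.
  by have /setU1P[ey|//] := subsetP sX y yX; rewrite -ey yX in ukX.
case/negP: nzeta; set Y := X :\ (u, k).
have YS : Y \subset S.
  apply/subsetP => y /setD1P[yuk yX].
  by have /setU1P[ey|//] := subsetP sX y yX; rewrite ey eqxx in yuk.
have col x : ias_bit G (u, k) x = ((x, kphi) \in Y).
  apply/eqP; rewrite -b2F_add_eq0 -(X0 x) (big_setD1 _ ukX) -/Y IAS_bit /=.
  apply/eqP; congr (_ + _); rewrite -sum_b2F_eq.
  apply: eq_bigr => -[w l] /(subsetP YS)/Sphi /= ->.
  by rewrite xpair_eqE !eqxx andbT.
have /eqP kz : k == zlabel G u.
  rewrite -[k == _]negbK -ias_bit_self col.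
  by apply/negP => /(subsetP YS); apply/negP.
rewrite kz eqxx; apply/forallP => w; apply/implyP => uw.
by apply: (subsetP YS); rewrite -col kz ias_bit_zlabel.
Qed.

Definition defect_set T B := [set v in vsupport B | (v, kphi) \notin T].

Definition has_normal_form G T B := exists ops : seq (lop * V),
  let H := (run ops G).1 in
  let beta := (run ops G).2 in
  [/\ looped_simple H, stable_set H (~: vsupport B) &
      beta @: T = [set (v, kphi) | v in vsupport B] :|: \bigcup_(v in ~: vsupport B) zeta H v].

Lemma phi_of_support T B v : defect_set T B = set0 -> v \in vsupport B -> (v, kphi) \in T.
Proof.
move=> D0 vB; apply: contraT => vT.
suff: v \in defect_set T B by rewrite D0 inE.
by rewrite inE vB.
Qed.

Lemma off_support_zeta G T B u k : transverse_basis G T B -> defect_set T B = set0 ->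
  u \notin vsupport B -> (u, k) \in T ->
  k = zlabel G u /\ forall w, adj G u w -> (w, kphi) \in B.
Proof.
move=> [HG HT [sBT iB maxB]] D0 uB ukT.
have Bphi : {in B, forall y, y.2 = kphi}.
  move=> [w l] wlB /=; apply: transversal_uniq HT (subsetP sBT _ wlB) _.
  exact: phi_of_support D0 (mem_vsupport wlB).
suff /andP[/eqP kz /forallP Nu] :
    (k == zlabel G u) && [forall w, adj G u w ==> ((w, kphi) \in B)].
  by split=> // w; apply/implyP.
apply: contraT => nzeta; case/negP: (uB); apply: (@mem_vsupport _ _ k).
rewrite -(maxB ((u, k) |: B)) ?setU11 ?subsetU1 //; first by rewrite subUset sub1set ukT.
apply: indep_setU1_phi => //; move: uB; apply: contra; exact: mem_vsupport.
Qed.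

Lemma normal_form_of_defect0 G T B : transverse_basis G T B -> defect_set T B = set0 ->
  has_normal_form G T B.
Proof.
move=> tb D0; case: (tb) => HG HT [sBT _ _].
have zetaT v : v \notin vsupport B ->
    (v, zlabel G v) \in T /\ forall w, adj G v w -> (w, kphi) \in B.
  move=> vB; have [k vkT] := transversal_ex v HT.
  by have [kz Nv] := off_support_zeta tb D0 vB vkT; rewrite -kz.
exists [::] => /=; split => //.
  move=> x y; rewrite !in_setC => xB yB.
  by apply/negbTE/negP => /(zetaT x xB).2/mem_vsupport; apply/negP.
rewrite imset_id; apply/setP => -[x k]; apply/idP/idP => [xkT|].
  rewrite in_setU; have [xB|xB] := boolP (x \in vsupport B).
    by rewrite (transversal_uniq HT xkT (phi_of_support D0 xB)) imset_f.
  apply/orP; right; apply/bigcupP; exists x; first by rewrite in_setC.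
  by rewrite (transversal_uniq HT xkT (zetaT x xB).1) /zeta setU11.
rewrite in_setU => /orP[/imsetP[v vB [-> ->]]|/bigcupP[v]]; first exact: phi_of_support D0 vB.
rewrite in_setC => vB /setU1P[[-> ->]|/imsetP[w]]; first exact: (zetaT v vB).1.
by rewrite inE => vw [-> ->]; apply: (subsetP sBT); exact: (zetaT v vB).2.
Qed.

Lemma mem_defect_set T B v :
  (v \in defect_set T B) = (v \in vsupport B) && ((v, kphi) \notin T).
Proof. by rewrite inE. Qed.

Lemma defect_set_op o v G T B :
  defect_set (op_map o v G @: T) (op_map o v G @: B) :\ v = defect_set T B :\ v.
Proof.
apply/setP => x; rewrite !in_setD1 !mem_defect_set (vsupport_imset (op_map_fst o v G)).
by have [//|xv] := eqVneq x v; rewrite mem_imset_op_map op_map_phi.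
Qed.

Lemma op_map_NS_phi G u : op_map OpNS u G (u, kphi) = (u, olabel G u).
Proof. by rewrite /op_map /olabel /xch /= eqxx; case: (loop G u). Qed.

Lemma op_map_S_olabel G w u : u != w -> adj G w u ->
  op_map OpS w G (u, olabel G u) = (u, zlabel G u).
Proof.
move=> uw wu; rewrite /op_map /= (negbTE uw) wu /xch /= eqxx /zlabel /olabel.
by case: (loop G u).
Qed.

Lemma card_defect_NS G T B u : u \in defect_set T B -> (u, olabel G u) \in T ->
  (#|defect_set (op_map OpNS u G @: T) (op_map OpNS u G @: B)| < #|defect_set T B|)%N.
Proof.
move=> uD uoT; apply/proper_card/(setD1_eq_proper (defect_set_op _ _ _ _ _)) => //.
by rewrite mem_defect_set mem_imset_op_map op_map_NS_phi uoT andbF.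
Qed.

Lemma card_defect_S G T B w : W_transversal T -> basis_of_restr G T B ->
  (w, kphi) \notin B ->
  (#|defect_set (op_map OpS w G @: T) (op_map OpS w G @: B)| <= #|defect_set T B|)%N.
Proof.
move=> HT HB wB; apply/subset_leq_card/(setD1_eq_subset (defect_set_op _ _ _ _ _)).
rewrite !mem_defect_set (vsupport_imset (op_map_fst _ _ _)) => /andP[wvB _].
by rewrite wvB; move: wB; apply: contra; exact: mem_basis_transversal HT HB wvB.
Qed.

Lemma zlabel_neighbour_off_basis G T B u : transverse_basis G T B ->
  u \in vsupport B -> (u, zlabel G u) \in T -> exists2 w, adj G u w & (w, kphi) \notin B.
Proof.
move=> [HG HT HB] uB uzT; have [_ iB _] := HB.
have [/forallP Nu|/forallPn[w]] := boolP [forall w, adj G u w ==> ((w, kphi) \in B)].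
  case: (zeta_not_subset (u := u) HG iB); apply/subsetP => y /setU1P[->|].
    exact: mem_basis_transversal HT HB uB uzT.
  by case/imsetP => w; rewrite inE => uw ->; apply: (implyP (Nu w)).
by rewrite negb_imply => /andP[uw wB]; exists w.
Qed.

Lemma defect_descent G T B : transverse_basis G T B -> defect_set T B != set0 ->
  exists ops, (#|defect_set ((run ops G).2 @: T) ((run ops G).2 @: B)| < #|defect_set T B|)%N.
Proof.
move=> tb /set0Pn[u uD]; have [[sym irr] HT HB] := tb.
have := uD; rewrite mem_defect_set => /andP[uB uT].
have [k ukT] := transversal_ex u HT.
have nkphi : k != kphi by apply: contraNneq uT => <-.
have [kz|kz] := eqVneq k (zlabel G u); last first.
  by exists [:: (OpNS, u)]; apply: card_defect_NS uD _; rewrite -(olabelP nkphi kz).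
rewrite kz in ukT; have [w uw wB] := zlabel_neighbour_off_basis tb uB ukT.
have wu : u != w by apply: contraTneq uw => ->; rewrite irr.
exists [:: (OpS, w); (OpNS, u)]; rewrite !run_cons_imset /= !imset_id.
apply: leq_trans (card_defect_S HT HB wB); apply: card_defect_NS.
  by rewrite mem_defect_set (vsupport_imset (op_map_fst _ _ _)) uB mem_imset_op_map op_map_phi.
by rewrite mem_imset_op_map op_map_S_olabel // sym.
Qed.

Lemma has_normal_form_run ops G T B :
  has_normal_form (run ops G).1 ((run ops G).2 @: T) ((run ops G).2 @: B) ->
  has_normal_form G T B.
Proof.
case=> ops'; rewrite /= (vsupport_imset (run_fst ops G)) => -[lsH stH eT].
by exists (ops ++ ops'); rewrite run_cat /= imset_comp.
Qed.

Lemma transverse_basis_normal_form G T B : transverse_basis G T B -> has_normal_form G T B.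
Proof.
have [n] := ubnP #|defect_set T B|; elim: n G T B => // n IH G T B Dn tb.
have [D0|D0] := eqVneq (defect_set T B) set0; first exact: normal_form_of_defect0.
have [ops lt] := defect_descent tb D0.
apply: (has_normal_form_run (ops := ops)); apply: IH; last exact: transverse_basis_run.
exact: leq_trans lt Dn.
Qed.

End Reduction.

Theorem theorem4p3 (V : finType) (G : lgraph V) (T B : {set V * 'I_3}) :
  looped_simple G -> W_transversal T -> basis_of_restr G T B ->
  let VB := [set v : V | [exists k : 'I_3, (v, k) \in B]] in
  exists ops : seq (lop * V),
    let H := (run ops G).1 in
    let beta := (run ops G).2 in
    [/\ looped_simple H,
        stable_set H (~: VB) &
        beta @: T = [set (v, kphi) | v in VB] :|: \bigcup_(v in ~: VB) zeta H v].
Proof. by move=> HG HT HB; apply: transverse_basis_normal_form. Qed.
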